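(* Let $\mathcal{P}\subseteq\mathcal{S}\subseteq\mathcal{T}$ be group properties. Suppose that for every nonempty set of the form $\mathcal{B}=\{G\in\mathcal{S}: \forall i,j\le k\ (G(i,j)=m_{i,j})\}$ (with $k\in\mathbb{N}$, $m_{i,j}\in\mathbb{N}$) there exist $G_0\in\mathcal{B}$, $H\in\mathcal{P}$ and a group homomorphism $\varphi:(\mathbb{N},G_0)\to(\mathbb{N},H)$ such that $\varphi$ restricted to $\operatorname{supp}\mathcal{B}=\{1,\dots,k\}\cup\{m_{i,j}: i,j\le k\}$ is injective. Then $\mathcal{P}$ is dense in $\mathcal{S}$.
   Context: Let $\mathbb{N}^{\mathbb{N}\times\mathbb{N}}$ be the space of functions $\mathbb{N}\times\mathbb{N}\to\mathbb{N}$ with the product of discrete topologies. Let $\mathcal{A}=\{G\in\mathbb{N}^{\mathbb{N}\times\mathbb{N}}: G \text{ is an abelian group operation on } \mathbb{N} \text{ with identity element } 0\}$ and $\mathcal{T}=\{G\in\mathcal{A}: (\mathbb{N},G)\text{ is torsion-free}\}$, with the subspace topology. A set $\mathcal{P}\subseteq\mathcal{T}$ is a group property if it is isomorphism invariant: for any $G\in\mathcal{T}$, if $(\mathbb{N},G)$ is isomorphic to $(\mathbb{N},H)$ for some $H\in\mathcal{P}$, then $G\in\mathcal{P}$. *)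

From HB Require Import structures.
From mathcomp Require Import all_boot all_order all_algebra.
From mathcomp Require Import all_classical all_reals all_analysis.

Set Implicit Arguments.
Unset Strict Implicit.
Unset Printing Implicit Defensive.

Local Open Scope classical_set_scope.

(* Points of the space N^(N x N): binary operations on nat. *)
Definition op := (nat * nat -> nat)%type.

(* The space N^(N x N) with the product of the discrete topologies
   (nat carries the discrete topology in mathcomp-analysis; {ptws _ -> _}
   is the product / pointwise-convergence topology). *)
Definition Space := {ptws (nat * nat) -> nat}.

Definition is_abgroup (G : op) : Prop :=
  [/\ (forall a b c, G (G (a, b), c) = G (a, G (b, c))),
      (forall a b, G (a, b) = G (b, a)),
      (forall a, G (0%N, a) = a) &
      (forall a, exists b, G (a, b) = 0%N)].

Fixpoint gmul (G : op) (n : nat) (a : nat) : nat :=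
  if n is n'.+1 then G (a, gmul G n' a) else 0%N.

Definition torsion_free (G : op) : Prop :=
  forall (a n : nat), (0 < n)%N -> gmul G n a = 0%N -> a = 0%N.

Definition calA : set op := [set G | is_abgroup G].
Definition calT : set op := [set G | is_abgroup G /\ torsion_free G].

Definition group_hom (G H : op) (phi : nat -> nat) : Prop :=
  forall a b, phi (G (a, b)) = H (phi a, phi b).

Definition group_iso (G H : op) (phi : nat -> nat) : Prop :=
  group_hom G H phi /\ bijective phi.

Definition group_property (P : set op) : Prop :=
  P `<=` calT /\
  (forall G H, calT G -> P H -> (exists phi, group_iso G H phi) -> P G).

Definition basic_set (S : set op) (k : nat) (m : nat -> nat -> nat) : set op :=
  [set G | S G /\ forall i j, (i <= k)%N -> (j <= k)%N -> G (i, j) = m i j].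

Definition supp_basic (k : nat) (m : nat -> nat -> nat) : set nat :=
  [set x | ((1 <= x)%N /\ (x <= k)%N) \/
           exists i j, [/\ (i <= k)%N, (j <= k)%N & x = m i j]].

(* P is dense in S, S carrying the subspace topology of N^(N x N):
   every point of S lies in the closure of P. *)
Definition dense_in (P S : set op) : Prop :=
  S `<=` @closure Space P.

From Pilot Require Import Defs.
From HB Require Import structures.
From mathcomp Require Import all_boot all_order all_algebra.
From mathcomp Require Import all_classical all_reals all_analysis.
Local Open Scope classical_set_scope.

(* A basic open neighbourhood of G in N^(NxN) fixes the finitely
   many values G(i,j), i,j <= k, so it suffices to find, for every k, some
   H in P agreeing with G on the box [0,k]^2 (lemma [closure_of_box_agreement]).
   Apply the hypothesis to the basic set B determined by the box values of G:
   it yields G0 in B, H in P and a homomorphism phi : G0 -> H injective on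
   supp B.  Since supp B is finite, a bijection sg of nat straightens phi on it
   (sg (phi x) = x for x in supp B, lemma [straighten_injective]).
   Transporting H along sg gives an isomorphic copy of H, hence still in P
   (lemma [group_property_transport]), and on the box this copy computes
   sg (H (phi i, phi j)) = sg (phi (G0 (i,j))) = G0 (i,j) = G (i,j)
   (lemma [transport_agrees_on_box]). *)

Definition agree_on_box (k : nat) (G : op) (m : nat -> nat -> nat) : Prop :=
  forall i j, (i <= k)%N -> (j <= k)%N -> G (i, j) = m i j.

Definition swap (a b z : nat) : nat :=
  if z == a then b else if z == b then a else z.

Lemma swapK a b : involutive (swap a b).
Proof.
move=> z; rewrite /swap.
case: (eqVneq z a) => [->|za]; first by rewrite eqxx; case: (eqVneq b a).
case: (eqVneq z b) => [->|zb]; first by rewrite eqxx.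
by rewrite (negbTE za) (negbTE zb).
Qed.

(* A map injective on D can be undone on D ∩ [0,N) by a bijection of nat:
   composing N transpositions sends f x back to x for every such x. *)
Lemma straighten_injective (f : nat -> nat) (D : nat -> Prop) (N : nat) :
  (forall x y, D x -> D y -> f x = f y -> x = y) ->
  exists sg tau : nat -> nat, [/\ cancel sg tau, cancel tau sg &
     forall x, (x < N)%N -> D x -> sg (f x) = x].
Proof.
move=> f_inj; elim: N => [|N [sg [tau [sgK tauK sg_f]]]].
  by exists id, id.
have [DN|nDN] := pselect (D N); last first.
  exists sg, tau; split => // x; rewrite ltnS leq_eqVlt => /orP[/eqP ->|] //.
  exact: sg_f.
pose t := swap (sg (f N)) N.
exists (t \o sg), (tau \o t); split.
- by move=> z /=; rewrite /t swapK sgK.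
- by move=> z /=; rewrite tauK /t swapK.
move=> x; rewrite ltnS leq_eqVlt => /orP[/eqP ->|xN] Dx /=.
  by rewrite /t /swap eqxx.
rewrite sg_f // /t /swap.
case: (eqVneq x (sg (f N))) => [x_eq|_]; last by rewrite (ltn_eqF xN).
have : f x = f N by rewrite -[f x]sgK -[f N]sgK sg_f // -x_eq.
by move/(f_inj _ _ Dx DN) => xE; rewrite xE ltnn in xN.
Qed.

Lemma group_hom0 {G H : op} {phi : nat -> nat} :
  calA G -> calA H -> group_hom G H phi -> phi 0%N = 0%N.
Proof.
move=> [_ _ G0a _] [H_assoc H_comm H0a H_inv] hom.
have idem : H (phi 0%N, phi 0%N) = phi 0%N by rewrite -hom G0a.
have [b hb] := H_inv (phi 0%N).
transitivity (H (phi 0%N, H (phi 0%N, b))); last by rewrite -H_assoc idem.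
by rewrite hb H_comm H0a.
Qed.

Definition transport (sg tau : nat -> nat) (H : op) : op :=
  fun p => sg (H (tau p.1, tau p.2)).

Section Transport.
Variables (sg tau : nat -> nat) (H : op).
Hypotheses (sgK : cancel sg tau) (tauK : cancel tau sg) (sg0 : sg 0%N = 0%N).

Lemma gmul_transport n a : gmul (transport sg tau H) n a = sg (gmul H n (tau a)).
Proof. by elim: n => [|n IH] //=; rewrite /transport /= IH sgK. Qed.

Lemma transport_iso : group_iso (transport sg tau H) H tau.
Proof. by split; [move=> a b; rewrite /transport /= sgK | exists sg]. Qed.

(* Since sg fixes 0, transport keeps torsion-free groups with identity 0. *)
Lemma transport_calT : calT H -> calT (transport sg tau H).
Proof.
move=> [[H_assoc H_comm H0a H_inv] H_tf].
have tau0 : tau 0%N = 0%N by rewrite -sg0 sgK.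
split; first split.
- by move=> a b c; rewrite /transport /= !sgK H_assoc.
- by move=> a b; rewrite /transport /= H_comm.
- by move=> a; rewrite /transport /= tau0 H0a tauK.
- by move=> a; have [b hb] := H_inv (tau a); exists (sg b); rewrite /transport /= sgK hb.
move=> a n n_gt0; rewrite gmul_transport => hn.
have : gmul H n (tau a) = 0%N by rewrite -tau0 -hn sgK.
by move/(H_tf _ _ n_gt0) => ta0; rewrite -[a]tauK ta0 sg0.
Qed.

Lemma group_property_transport (P : set op) :
  group_property P -> P H -> P (transport sg tau H).
Proof.
move=> [PT Piso] PH; apply: (Piso _ H) => //.
  exact: transport_calT (PT _ PH).
by exists tau; exact: transport_iso.
Qed.

End Transport.

(* supp B is finite: it is bounded by k plus the largest prescribed value. *)
Lemma supp_basic_bounded k m : exists N, forall x, supp_basic k m x -> (x < N)%N.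
Proof.
pose M := \max_(i <- iota 0 k.+1) \max_(j <- iota 0 k.+1) m i j.
exists (M + k).+1 => x [[_ xk]|[i [j [ik jk ->]]]]; rewrite ltnS.
  by rewrite (leq_trans xk) // leq_addl.
rewrite (leq_trans _ (leq_addr _ _)) //.
have mem_box l : (l <= k)%N -> l \in iota 0 k.+1 by rewrite mem_iota.
apply: leq_trans (leq_bigmax_seq i (mem_box _ ik) isT).
exact: (leq_bigmax_seq j (mem_box _ jk) isT).
Qed.

Lemma supp_basic_index {k m i} : m 0%N 0%N = 0%N -> (i <= k)%N -> supp_basic k m i.
Proof.
move=> m00; case: i => [|i] ik; last by left.
by right; exists 0%N, 0%N; split.
Qed.

Lemma transport_agrees_on_box {G0 H : op} {phi : nat -> nat} {k m} :
  calA G0 -> calA H -> group_hom G0 H phi ->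
  {in supp_basic k m &, injective phi} ->
  agree_on_box k G0 m -> m 0%N 0%N = 0%N ->
  exists sg tau, [/\ cancel sg tau, cancel tau sg, sg 0%N = 0%N &
                     agree_on_box k (transport sg tau H) m].
Proof.
move=> AG0 AH hom phi_inj G0m m00.
have [N ltN] := supp_basic_bounded k m.
have [sg [tau [sgK tauK sg_phi]]] := @straighten_injective phi (supp_basic k m) N
  (fun x y Dx Dy => phi_inj x y (mem_set Dx) (mem_set Dy)).
have sg_phiD x : supp_basic k m x -> sg (phi x) = x.
  by move=> Dx; apply: sg_phi => //; exact: ltN.
have tau_idx i : (i <= k)%N -> tau i = phi i.
  by move=> ik; rewrite -{1}(sg_phiD i (supp_basic_index m00 ik)) sgK.
have sg0 : sg 0%N = 0%N.
  rewrite -{1}(group_hom0 AG0 AH hom).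
  exact: sg_phiD (supp_basic_index m00 (leq0n k)).
exists sg, tau; split => // i j ik jk.
rewrite /transport /= tau_idx // tau_idx // -hom G0m // sg_phiD //.
by right; exists i, j.
Qed.

Lemma box_approximation (P S : set op) :
  group_property P -> group_property S ->
  (forall (k : nat) (m : nat -> nat -> nat),
     basic_set S k m !=set0 ->
     exists G0 H (phi : nat -> nat),
       [/\ basic_set S k m G0, P H, group_hom G0 H phi &
           {in supp_basic k m &, injective phi}]) ->
  forall G k, S G -> exists H, P H /\ agree_on_box k H (fun i j => G (i, j)).
Proof.
move=> gP [ST _] hyp G k SG.
pose m i j := G (i, j).
have [G0 [H [phi [[SG0 G0m] PH hom phi_inj]]]] : exists G0 H (phi : nat -> nat),
    [/\ basic_set S k m G0, P H, group_hom G0 H phi &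
        {in supp_basic k m &, injective phi}].
  by apply: hyp; exists G.
have m00 : m 0%N 0%N = 0%N by have [[_ _ G0a _] _] := ST G SG; exact: G0a.
have [sg [tau [sgK tauK sg0 agree]]] := transport_agrees_on_box
  (ST _ SG0).1 (gP.1 _ PH).1 hom phi_inj G0m m00.
by exists (transport sg tau H); split => //; exact: group_property_transport.
Qed.

(* Box agreement is pointwise convergence: if G is approximated on every box
   by members of P, then G lies in the closure of P. *)
Lemma closure_of_box_agreement (P : set op) (G : op) :
  (forall k, exists H, P H /\ agree_on_box k H (fun i j => G (i, j))) ->
  @closure Defs.Space P G.
Proof.
move=> approx; have [Hs hHs] := choice approx.
have cvHs : (fun n => Hs n : Defs.Space) @ \oo --> (G : Defs.Space).
  apply/pointwise_cvgP => -[a b]; apply: cvg_near_cst.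
  exists (maxn a b) => // n /= abn; apply: (hHs n).2.
  - by apply: leq_trans abn; rewrite leq_maxl.
  - by apply: leq_trans abn; rewrite leq_maxr.
move=> B nbhsB; have [N _ HsB] := cvHs B nbhsB.
by exists (Hs N); split; [exact: (hHs N).1 | exact: (HsB N (leqnn N))].
Qed.

Theorem lemma2p10 (P S : set op) :
  group_property P -> group_property S -> P `<=` S ->
  (forall (k : nat) (m : nat -> nat -> nat),
     basic_set S k m !=set0 ->
     exists G0 H (phi : nat -> nat),
       [/\ basic_set S k m G0, P H, group_hom G0 H phi &
           {in supp_basic k m &, injective phi}]) ->
  dense_in P S.
Proof.
move=> gP gS _ hyp G SG.
apply: closure_of_box_agreement => k.
exact: box_approximation gP gS hyp G k SG.
Qed.
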